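(* Let $n\ge1$, $\gamma>0$, and let $A:[0,1]^{2n}\to\mathbb{R}_+^{n\times n}$ be a $\mathcal C^1$ matrix-valued function, defining the system $\dot{x} = -[x]A(x,y)\,y$, $\dot{y} = [x]A(x,y)\,y-\gamma y$. Suppose that, for all indices $i,j,k\in\{1,\dots,n\}$ with $k\ne i$, $$A_{ij}+x_i\frac{\partial A_{ij}}{\partial x_i}\ge 0,\qquad \frac{\partial A_{ij}}{\partial x_k}\ge 0$$ (at every point of the domain of $A$). Then the stability condition $\lambda_{\max}([x]A(x,\mathbf 0))<\gamma$ for equilibria $(x,\mathbf 0)$ is monotone: for all $x,z\in[0,1]^n$ with $x\le z$ one has $\lambda_{\max}([x]A(x,\mathbf 0))\le\lambda_{\max}([z]A(z,\mathbf 0))$; in particular, if $(z,\mathbf 0)$ satisfies $\lambda_{\max}([z]A(z,\mathbf 0))<\gamma$, then so does every $(x,\mathbf 0)$ with $x\le z$.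
   Context: For $x\in\mathbb{R}^n$, $[x]$ denotes the diagonal matrix with diagonal $x$. For a nonnegative square matrix $B$, $\lambda_{\max}(B)$ denotes its dominant (Perron) eigenvalue, i.e. its spectral radius. Vector inequalities are entrywise. The equilibria of the system are the points $(x,\mathbf 0)$, $x\in[0,1]^n$. *)

From HB Require Import structures.
From mathcomp Require Import all_boot all_order all_algebra.
From mathcomp Require Import all_classical all_reals all_analysis.
From mathcomp Require Import complex.
Set Implicit Arguments. Unset Strict Implicit. Unset Printing Implicit Defensive.
Import Order.TTheory GRing.Theory Num.Theory.
Import numFieldNormedType.Exports.
Local Open Scope classical_set_scope.
Local Open Scope ring_scope.

Definition unit_cube (R : realType) (n : nat) : set 'rV[R]_n :=
  [set x | forall i, 0 <= x ord0 i <= 1].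

Definition diagv (R : realType) (n : nat) (x : 'rV[R]_n) : 'M[R]_n := diag_mx x.

(* Spectral radius: the largest modulus of a (complex) eigenvalue.
   For a nonnegative matrix this is its dominant (Perron) eigenvalue. *)
Definition spectral_radius (R : realType) (n : nat) (B : 'M[R]_n) : R :=
  sup [set r : R | exists l : R[i],
         eigenvalue (map_mx (fun a : R => (a%:C)%C) B) l /\ r = Normc.normc l].

Definition partial_x (R : realType) (n : nat) (k : 'I_n)
  (g : 'rV[R]_n * 'rV[R]_n -> R) (p : 'rV[R]_n * 'rV[R]_n) : R :=
  'D_(delta_mx ord0 k, 0) g p.

Definition C1_on (R : realType) (n : nat) (U : set ('rV[R]_n * 'rV[R]_n))
  (g : 'rV[R]_n * 'rV[R]_n -> R) : Prop :=
  open U /\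
  (forall p, U p -> differentiable g p) /\
  (forall v p, U p -> {for p, continuous (fun q => 'D_v g q)}).

(* Entrywise [x]A(x,0) <= [z]A(z,0) when x <= z: along the segment from x to
   z, with d = z - x >= 0, the derivative of x_i A_ij(x,0) is
   d_i (A_ij + x_i dA_ij/dx_i) + x_i sum_(k <> i) d_k dA_ij/dx_k >= 0.
   The spectral radius is monotone on nonnegative matrices 0 <= B <= C: if B
   had an eigenvalue l with |l| > rho(C), the moduli u of a left eigenvector
   would satisfy |l| u <= u C.  But (sI - C)^-1 >= 0 for all s > rho(C): this
   holds for large s by a fixpoint equation, and propagates down to rho(C)
   through the resolvent identity and the continuity of adj/det in s.  Hence
   u = u (|l| - C) (|l| - C)^-1 <= 0, so u = 0. *)
From HB Require Import structures.
From mathcomp Require Import all_boot all_order all_algebra.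
From mathcomp Require Import all_classical all_reals all_analysis.
From mathcomp Require Import complex.
From mathcomp Require Import ring lra.
Import Order.TTheory GRing.Theory Num.Theory.
Import numFieldNormedType.Exports.
Local Open Scope classical_set_scope.
Local Open Scope ring_scope.

Set Implicit Arguments. Unset Strict Implicit. Unset Printing Implicit Defensive.

Section NonnegativeMatrices.
Variable R : realType.

Definition nnegmx n (M : 'M[R]_n) := forall i j, 0 <= M i j.

Local Notation mxsum M := (\sum_a \sum_b M a b).

Lemma row_sum_le_mxsum n (M : 'M[R]_n) i : nnegmx M -> \sum_k M i k <= mxsum M.
Proof.
move=> M0; rewrite [leRHS](bigD1 i) //= lerDl.
by apply: sumr_ge0 => a _; apply: sumr_ge0.
Qed.

Lemma nnegmx_fixpoint n (X E G : 'M[R]_n) : nnegmx E -> nnegmx G ->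
  (forall i, \sum_k G i k < 1) -> X = E + G *m X -> nnegmx X.
Proof.
move=> E0 G0 G1 eX i j; rewrite leNgt; apply/negP => Xij_lt0.
have [[a b] _ Xab_min] := @real_arg_minP _ _ (i, j) xpredT
  (fun p : 'I_n * 'I_n => X p.1 p.2) isT (fun p _ => num_real _).
have Xab_lt0 : X a b < 0 by apply: le_lt_trans (Xab_min (i, j) isT) Xij_lt0.
have eXab : X a b = E a b + \sum_k G a k * X k b by rewrite {1}eX !mxE.
have Xab_le : (\sum_k G a k) * X a b <= \sum_k G a k * X k b.
  rewrite mulr_suml; apply: ler_sum => k _; apply: ler_wpM2l => //.
  exact: (Xab_min (k, b) isT).
have Xab_lt : X a b < (\sum_k G a k) * X a b.
  by have := G1 a; move: (\sum_k G a k) => g; nra.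
by have := E0 a b; lra.
Qed.

Lemma horner_char_poly_mx n (C : 'M[R]_n) s :
  map_mx (horner_eval s) (char_poly_mx C) = s%:M - C.
Proof.
by apply/matrixP => i j; rewrite !mxE rmorphB rmorphMn /= !horner_evalE hornerX hornerC.
Qed.

Lemma horner_char_poly n (C : 'M[R]_n) s : (char_poly C).[s] = \det (s%:M - C).
Proof. by rewrite -horner_evalE -det_map_mx horner_char_poly_mx. Qed.

Lemma horner_adj_char_poly_mx n (C : 'M[R]_n) s i j :
  (\adj (char_poly_mx C) i j).[s] = \adj (s%:M - C) i j.
Proof. by rewrite -horner_char_poly_mx -map_mx_adj [RHS]mxE. Qed.

Lemma invmx_ge0E n (M : 'M[R]_n) i j : \det M != 0 ->
  (0 <= invmx M i j) = (0 <= \adj M i j * \det M).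
Proof.
move=> M0; rewrite /invmx unitmxE unitfE M0 mxE.
have [M_lt0|M_gt0|M_eq0] := ltgtP (\det M) 0; last by rewrite M_eq0 eqxx in M0.
  by rewrite nmulr_rge0 ?invr_lt0 // nmulr_lge0.
by rewrite pmulr_rge0 ?invr_gt0 // pmulr_lge0.
Qed.

Lemma continuous_ge0_at_right (f : R -> R) a : {for a, continuous f} ->
  (forall s, a < s -> 0 <= f s) -> 0 <= f a.
Proof.
move=> fa f_ge0; rewrite leNgt; apply/negP => fa_lt0.
have [e /= e0 He] := cvgr_lt (f a) fa 0 fa_lt0.
have : ball a e (a + e / 2).
  by rewrite /ball /= opprD addrA subrr sub0r normrN gtr0_norm; lra.
by move=> /He /=; rewrite ltNge f_ge0 //; lra.
Qed.

Lemma resolvent_ge0_large n (C : 'M[R]_n) s : nnegmx C -> mxsum C < s ->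
  (s%:M - C) \in unitmx -> nnegmx (invmx (s%:M - C)).
Proof.
move=> C0 Cs U.
have s_gt0 : 0 < s by apply: le_lt_trans Cs; apply: sumr_ge0 => a _; exact: sumr_ge0.
set X := invmx _.
have := mulmxV U; rewrite -/X mulmxBl mul_scalar_mx => eX1.
have eX : X = s^-1 *: 1%:M + (s^-1 *: C) *m X.
  by rewrite -scalemxAl -scalerDr -eX1 subrK scalerA mulVf ?scale1r // gt_eqF.
have sV_ge0 : 0 <= s^-1 by rewrite invr_ge0 ltW.
apply: (nnegmx_fixpoint _ _ _ eX) => [i j|i j|i].
- by rewrite !mxE mulr_ge0.
- by rewrite !mxE mulr_ge0.
- under eq_bigr do rewrite mxE; rewrite -mulr_sumr ltr_pdivrMl // mulr1.
  exact: le_lt_trans (row_sum_le_mxsum _ C0) Cs.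
Qed.

Lemma resolvent_ge0_left n (C : 'M[R]_n) a :
  (a%:M - C) \in unitmx -> nnegmx (invmx (a%:M - C)) ->
  exists2 e, 0 < e & forall s, a - e <= s <= a ->
    (s%:M - C) \in unitmx -> nnegmx (invmx (s%:M - C)).
Proof.
set F := invmx (a%:M - C) => Ua F0.
have T0 : 0 <= mxsum F by apply: sumr_ge0 => i _; apply: sumr_ge0.
exists (mxsum F + 1)^-1; first by rewrite invr_gt0; lra.
move=> s /andP[s_ge s_le] Us; set X := invmx _; set d := a - s.
have d0 : 0 <= d by rewrite subr_ge0.
have dT : d * mxsum F < 1.
  have : d * (mxsum F + 1) <= 1 by rewrite -ler_pdivlMr ?mul1r /d; lra.
  nra.
(* resolvent identity: (s - C)^-1 = (a - C)^-1 + (a - s) (a - C)^-1 (s - C)^-1 *)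
have eX : X = F + (d *: F) *m X.
  have eC : s%:M - C = (a%:M - C) - d%:M.
    by rewrite /d raddfB /= opprB addrCA addrAC subrr add0r.
  have eX1 : (a%:M - C) *m X = 1%:M + d *: X.
    by rewrite -[LHS](subrK (d%:M *m X)) -mulmxBl -eC mulmxV // mul_scalar_mx.
  have eXF : X = F *m ((a%:M - C) *m X) by rewrite mulmxA mulVmx // mul1mx.
  by rewrite {1}eXF eX1 mulmxDr mulmx1 -scalemxAr scalemxAl.
apply: (nnegmx_fixpoint _ _ _ eX) => [//|i j|i].
- by rewrite !mxE mulr_ge0.
- under eq_bigr do rewrite mxE; rewrite -mulr_sumr.
  by apply: le_lt_trans dT; rewrite ler_wpM2l // row_sum_le_mxsum.
Qed.

Lemma resolvent_ge0_right_closed n (C : 'M[R]_n) a :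
  (forall s, a <= s -> \det (s%:M - C) != 0) ->
  (forall s, a < s -> nnegmx (invmx (s%:M - C))) -> nnegmx (invmx (a%:M - C)).
Proof.
move=> det_neq0 F_ge0 i j; rewrite invmx_ge0E ?det_neq0 //.
rewrite -horner_adj_char_poly_mx -horner_char_poly -hornerM.
apply: continuous_ge0_at_right => [|s a_lt_s]; first exact: continuous_horner.
rewrite hornerM horner_adj_char_poly_mx horner_char_poly -invmx_ge0E ?F_ge0 //.
by rewrite det_neq0 ?ltW.
Qed.

Lemma resolvent_ge0 n (C : 'M[R]_n) t : nnegmx C ->
  (forall s, t <= s -> \det (s%:M - C) != 0) -> nnegmx (invmx (t%:M - C)).
Proof.
move=> C0 det_neq0.
have U s : t <= s -> (s%:M - C) \in unitmx by move=> ts; rewrite unitmxE unitfE det_neq0.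
pose P s := nnegmx (invmx (s%:M - C)).
pose S := [set a | t <= a /\ forall s, a <= s -> P s].
pose K := Num.max t (mxsum C + 1).
have SK : S K.
  have tK : t <= K by rewrite le_max lexx.
  split=> // s Ks; apply: resolvent_ge0_large => //; last exact/U/(le_trans tK).
  by apply: lt_le_trans Ks; rewrite lt_max ltrDl ltr01 orbT.
have t_lbS : lbound S t by move=> b [].
have S_inf : has_inf S by split; [exists K | exists t].
(* a = inf S must be t, since nonnegativity extends a little below any a > t *)
set a := inf S.
have ta : t <= a by apply: lb_le_inf => //; exists K.
have Pgt s : a < s -> P s.
  rewrite -subr_gt0 => sa_gt0; have [b [_ Pb]] := inf_adherent sa_gt0 S_inf.
  by rewrite addrC subrK => /ltW; apply: Pb.
have Pge s : a <= s -> P s.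
  rewrite le_eqVlt => /predU1P[<-|/Pgt//].
  apply: resolvent_ge0_right_closed => // u au.
  exact/det_neq0/(le_trans ta).
have [->|t_neq_a] := eqVneq t a; first exact: Pge.
have [e e_gt0 Ple] := resolvent_ge0_left (U a ta) (Pge a (lexx a)).
pose m := Num.min e (a - t).
have m_gt0 : 0 < m by rewrite lt_min e_gt0 subr_gt0 lt_neqAle t_neq_a ta.
have [me mat] : m <= e /\ m <= a - t by rewrite !ge_min !lexx orbT.
have : S (a - m).
  split=> [|s ams]; first by lra.
  have [/Pge//|s_lt_a] := leP a s.
  by apply: Ple; [apply/andP; split; lra | apply: U; lra].
by move/(ge_inf S_inf.2); rewrite -/a; lra.
Qed.

Lemma nneg_subeigenvector_eq0 n (C : 'M[R]_n) (u : 'rV[R]_n) r : nnegmx C ->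
  (forall s, r <= s -> \det (s%:M - C) != 0) -> (forall j, 0 <= u 0 j) ->
  (forall j, r * u 0 j <= (u *m C) 0 j) -> u = 0.
Proof.
move=> C0 det_neq0 u_ge0 u_sub.
have U : (r%:M - C) \in unitmx by rewrite unitmxE unitfE det_neq0.
set w := u *m (r%:M - C).
have w_le0 k : w 0 k <= 0.
  by have := u_sub k; rewrite /w mulmxBr mul_mx_scalar !mxE subr_le0.
have eu : u = w *m invmx (r%:M - C) by rewrite /w -mulmxA mulmxV // mulmx1.
apply/rowP => j; apply/eqP; rewrite mxE eq_le u_ge0 andbT eu mxE.
by apply: sumr_le0 => k _; rewrite mulr_le0_ge0 // resolvent_ge0.
Qed.

Local Open Scope complex_scope.
Local Notation toC := (real_complex R).

Definition eigen_moduli n (B : 'M[R]_n) := [set r : R | exists l : R[i],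
  eigenvalue (map_mx (fun a : R => (a%:C)%C) B) l /\ r = Normc.normc l].

Lemma normc_ge0 (z : R[i]) : 0 <= Normc.normc z.
Proof. by case: z => a b; rewrite /= sqrtr_ge0. Qed.

Lemma normc_real (x : R) : Normc.normc x%:C = `|x|.
Proof. by rewrite /= expr0n /= addr0 sqrtr_sqr. Qed.

Lemma normr_normc (z : R[i]) : `|z| = (Normc.normc z)%:C.
Proof. by case: z. Qed.

Lemma left_eigenvector_normc_le n (B : 'M[R]_n) (l : R[i]) (v : 'rV[R[i]]_n) j :
  v *m map_mx toC B = l *: v ->
  Normc.normc l * Normc.normc (v 0 j) <= \sum_i Normc.normc (v 0 i) * `|B i j|.
Proof.
move=> ev; have e : l * v 0 j = \sum_i v 0 i * (B i j)%:C.
  move/matrixP: ev => /(_ 0 j); rewrite !mxE => <-.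
  by apply: eq_bigr => i _; rewrite mxE.
have sum_normr : \sum_i `|v 0 i * (B i j)%:C|
    = (\sum_i Normc.normc (v 0 i) * `|B i j|)%:C.
  rewrite rmorph_sum; apply: eq_bigr => i _.
  by rewrite normrM !normr_normc normc_real rmorphM.
have := ler_norm_sum (index_enum 'I_n) (fun i => v 0 i * (B i j)%:C) xpredT.
by rewrite -e sum_normr normrM !normr_normc -rmorphM lecR.
Qed.

Lemma eigenvalue_normc_le n (B : 'M[R]_n) l : eigenvalue (map_mx toC B) l ->
  Normc.normc l <= \sum_a \sum_b `|B a b|.
Proof.
move/eigenvalueP => [v ev v_neq0].
have [j0 vj0_neq0] : exists j, v 0 j != 0.
  apply/existsP; apply: contraR v_neq0 => /existsPn v0.
  by apply/eqP/rowP => j; rewrite mxE; apply/eqP; rewrite -[_ == _]negbK v0.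
have [j _ vj_max] := @real_arg_maxP _ _ j0 xpredT
  (fun j => Normc.normc (v 0 j)) isT (fun _ _ => num_real _).
have vj_gt0 : 0 < Normc.normc (v 0 j).
  apply: lt_le_trans (vj_max j0 isT); rewrite lt_def normc_ge0 andbT.
  by apply: contra vj0_neq0 => /eqP/Normc.eq0_normc ->.
have col_le : \sum_i Normc.normc (v 0 i) * `|B i j| <=
              Normc.normc (v 0 j) * \sum_a \sum_b `|B a b|.
  rewrite mulr_sumr; apply: ler_sum => a _.
  apply: ler_pM => //; [exact: normc_ge0 | exact: vj_max |].
  by rewrite [leRHS](bigD1 j) //= lerDl sumr_ge0.
by have := le_trans (left_eigenvector_normc_le j ev) col_le; rewrite mulrC ler_pM2l.
Qed.

Lemma eigen_moduli_ub n (B : 'M[R]_n) : has_ubound (eigen_moduli B).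
Proof. by exists (\sum_a \sum_b `|B a b|) => r [l [/eigenvalue_normc_le ? ->]]. Qed.

Lemma det_neq0_gt_spectral_radius n (C : 'M[R]_n) s :
  spectral_radius C < s -> \det (s%:M - C) != 0.
Proof.
move=> C_lt_s; apply/negP => /eqP det0.
have ev : eigenvalue (map_mx toC C) s%:C.
  rewrite eigenvalue_root_char -map_char_poly /root horner_map /=.
  by rewrite horner_char_poly det0 rmorph0.
have := ub_le_sup (eigen_moduli_ub C) (ex_intro _ s%:C (conj ev erefl)).
by rewrite normc_real -/(spectral_radius C); have := ler_norm s; lra.
Qed.

Lemma le_spectral_radius n (B C : 'M[R]_n) : (0 < n)%N -> nnegmx B ->
  (forall i j, B i j <= C i j) -> spectral_radius B <= spectral_radius C.
Proof.
move=> n_gt0 B0 BC; have C0 : nnegmx C by move=> i j; exact: le_trans (B0 i j) (BC i j).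
apply: ge_sup.
  have [l ev] := eigenvalue_closed (map_mx toC B) n_gt0.
  by exists (Normc.normc l), l.
move=> r [l [/eigenvalueP[v ev v_neq0] ->]]; rewrite leNgt; apply/negP => C_lt_l.
pose u := \row_j Normc.normc (v 0 j).
suff u0 : u = 0.
  move/negP: v_neq0; apply; apply/eqP/rowP => j.
  by move/matrixP: u0 => /(_ 0 j); rewrite !mxE => /Normc.eq0_normc.
apply: (nneg_subeigenvector_eq0 (r := Normc.normc l) C0) => [s l_le_s|j|j].
- exact/det_neq0_gt_spectral_radius/(lt_le_trans C_lt_l).
- by rewrite mxE normc_ge0.
- rewrite !mxE; apply: le_trans (left_eigenvector_normc_le j ev) _.
  apply: ler_sum => i _; rewrite mxE ger0_norm // ler_wpM2l ?normc_ge0 //.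
Qed.

End NonnegativeMatrices.

Section SegmentCalculus.
Variable R : realType.

Lemma is_derive_along_line (V W : normedModType R) (g : V -> W) (p w : V) (t : R) :
  derivable g (p + t *: w) w ->
  is_derive t 1 (fun s : R => g (p + s *: w)) ('D_w g (p + t *: w)).
Proof.
move=> dg.
have E : (fun h : R => h^-1 *: (((fun s : R => g (p + s *: w)) \o shift t) (h *: 1)
                                 - g (p + t *: w)))
       = (fun h : R => h^-1 *: ((g \o shift (p + t *: w)) (h *: w) - g (p + t *: w))).
  apply: funext => h /=.
  have -> : h%:A = h :> R by rewrite -[RHS]mulr1.
  by rewrite scalerDl addrCA.
by apply: DeriveDef; [rewrite /derivable E | rewrite /derive E].
Qed.

Lemma le01_is_derive_ge0 (f df : R -> R) :
  (forall s : R, 0 <= s <= 1 -> is_derive s 1 f (df s)) ->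
  (forall s : R, 0 < s < 1 -> 0 <= df s) -> f 0 <= f 1.
Proof.
move=> f_df df_ge0.
have in01 (s : R) : s \in `]0, 1[ -> 0 <= s <= 1.
  by rewrite in_itv /= => /andP[? ?]; rewrite !ltW.
apply: (@ger0_derive1_ndecr _ f 0 1) => //.
- by move=> s /in01 /f_df [].
- move=> s s01; rewrite derive1E; have [_ ->] := f_df s (in01 s s01).
  by apply: df_ge0; rewrite in_itv /= in s01.
- apply: continuous_in_subspaceT => s; rewrite inE /= in_itv /= => /f_df [+ _].
  by move/derivable1_diffP/differentiable_continuous.
Qed.

Lemma derive_rowl_partial n (f : 'rV[R]_n * 'rV[R]_n -> R) q (d : 'rV[R]_n) :
  differentiable f q -> 'D_(d, 0) f q = \sum_k d ord0 k * partial_x k f q.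
Proof.
move=> df.
have d_sum : (d, 0) = \sum_k d 0 k *: ((delta_mx 0 k : 'rV[R]_n), (0 : 'rV[R]_n)).
  apply: injective_projections => /=.
    rewrite (big_morph (fun p : 'rV[R]_n * 'rV[R]_n => p.1) (id1 := 0) (op1 := +%R)) //.
    exact: row_sum_delta.
  rewrite (big_morph (fun p : 'rV[R]_n * 'rV[R]_n => p.2) (id1 := 0) (op1 := +%R)) //=.
  by rewrite big1 // => k _; rewrite scaler0.
rewrite deriveE // d_sum linear_sum; apply: eq_bigr => k _.
by rewrite linearZ /partial_x deriveE.
Qed.

Lemma unit_cube0 n : unit_cube (0 : 'rV[R]_n).
Proof. by move=> k; rewrite mxE lexx ler01. Qed.

Lemma unit_cube_segment n (x z : 'rV[R]_n) s : unit_cube x -> unit_cube z ->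
  0 <= s <= 1 -> unit_cube (x + s *: (z - x)).
Proof.
move=> cx cz /andP[s0 s1] k; rewrite !mxE.
by have /andP[? ?] := cx k; have /andP[? ?] := cz k; apply/andP; split; nra.
Qed.

Lemma scaled_entry_le n (g : 'rV[R]_n * 'rV[R]_n -> R) (i : 'I_n) (x z : 'rV[R]_n) :
  (forall y, unit_cube y -> differentiable g (y, 0)) ->
  (forall y, unit_cube y -> 0 <= g (y, 0) + y ord0 i * partial_x i g (y, 0)) ->
  (forall y k, unit_cube y -> k != i -> 0 <= partial_x k g (y, 0)) ->
  unit_cube x -> unit_cube z -> (forall k, x ord0 k <= z ord0 k) ->
  x ord0 i * g (x, 0) <= z ord0 i * g (z, 0).
Proof.
move=> g_diff g_ii g_ik cx cz xz.
set d := z - x; pose y s := x + s *: d.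
have d_ge0 k : 0 <= d ord0 k by rewrite !mxE subr_ge0.
have cy (s : R) : 0 <= s <= 1 -> unit_cube (y s) by exact: unit_cube_segment.
have on_line s : (x, 0) + s *: (d, 0) = (y s, 0 : 'rV[R]_n).
  by apply: injective_projections; rewrite /= ?scaler0 ?addr0.
pose lin s := x ord0 i + s * d ord0 i.
pose psi s := g ((x, 0) + s *: (d, 0)).
pose D s := \sum_k d ord0 k * partial_x k g (y s, 0).
have lin_y s : lin s = y s ord0 i by rewrite /lin /y /d !mxE.
have psi_y s : psi s = g (y s, 0) by rewrite /psi on_line.
have lin_derive (s : R) : is_derive s 1 lin (d ord0 i).
  by apply: is_derive_eq; rewrite add0r mul1r scaler0 add0r; exact: mulr1.
have psi_derive (s : R) : 0 <= s <= 1 -> is_derive s 1 psi (D s).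
  move=> s01; have gy := g_diff _ (cy s s01); apply: is_derive_eq.
    by apply/is_derive_along_line/diff_derivable; rewrite on_line.
  by rewrite on_line derive_rowl_partial.
have : (lin * psi) 0 <= (lin * psi) 1.
  apply: (@le01_is_derive_ge0 _ (fun s => lin s *: D s + psi s *: d ord0 i)).
    by move=> s s01; exact: is_deriveM (lin_derive s) (psi_derive s s01).
  move=> s /andP[s_gt0 s_lt1]; have s01 : 0 <= s <= 1 by rewrite !ltW.
  have rest_ge0 : 0 <= \sum_(k | k != i) d ord0 k * partial_x k g (y s, 0).
    by apply: sumr_ge0 => k ki; exact: mulr_ge0 (d_ge0 k) (g_ik _ _ (cy s s01) ki).
  have /andP[yi_ge0 _] := cy s s01 i.
  rewrite /GRing.scale /= /D (bigD1 i) //= lin_y psi_y.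
  set p := partial_x i g _; set r := \sum_(k | _) _.
  have -> : y s ord0 i * (d ord0 i * p + r) + g (y s, 0) * d ord0 i
          = d ord0 i * (g (y s, 0) + y s ord0 i * p) + y s ord0 i * r by ring.
  by apply: addr_ge0; apply: mulr_ge0 => //; exact/g_ii/cy.
by rewrite !mulrfctE !lin_y !psi_y /y scale0r scale1r addr0 /d addrC subrK.
Qed.

End SegmentCalculus.

Unset Implicit Arguments.

Theorem proposition2 (R : realType) (n : nat) (gamma : R)
  (A : 'rV[R]_n -> 'rV[R]_n -> 'M[R]_n) :
  (0 < n)%N -> 0 < gamma ->
  (* A maps [0,1]^{2n} into nonnegative matrices *)
  (forall x y, unit_cube x -> unit_cube y -> forall i j, 0 <= A x y i j) ->
  (* A is C^1 (on an open neighbourhood of [0,1]^{2n}) *)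
  (exists U : set ('rV[R]_n * 'rV[R]_n),
      [set p | unit_cube p.1 /\ unit_cube p.2] `<=` U /\
      forall i j, C1_on U (fun p => A p.1 p.2 i j)) ->
  (forall x y, unit_cube x -> unit_cube y -> forall i j,
      0 <= A x y i j + x ord0 i * partial_x i (fun p => A p.1 p.2 i j) (x, y)) ->
  (forall x y, unit_cube x -> unit_cube y -> forall i j k, k != i ->
      0 <= partial_x k (fun p => A p.1 p.2 i j) (x, y)) ->
  (forall x z, unit_cube x -> unit_cube z -> (forall i, x ord0 i <= z ord0 i) ->
      spectral_radius (diagv x *m A x 0) <= spectral_radius (diagv z *m A z 0))
  /\
  (forall x z, unit_cube x -> unit_cube z -> (forall i, x ord0 i <= z ord0 i) ->
      spectral_radius (diagv z *m A z 0) < gamma ->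
      spectral_radius (diagv x *m A x 0) < gamma).
Proof.
move=> n_gt0 _ A_ge0 [U [cube_U A_C1]] A_ii A_ik.
have cube0 := @unit_cube0 R n.
have rho_le x z : unit_cube x -> unit_cube z -> (forall i, x ord0 i <= z ord0 i) ->
    spectral_radius (diagv x *m A x 0) <= spectral_radius (diagv z *m A z 0).
  move=> cx cz xz; apply: le_spectral_radius => // i j.
    by rewrite /diagv mul_diag_mx mxE mulr_ge0 ?A_ge0 //; case/andP: (cx i).
  rewrite /diagv !mul_diag_mx !mxE.
  apply: (scaled_entry_le (g := fun p => A p.1 p.2 i j)) => // [y cy|y cy|y k cy ki].
  - by have [_ [A_diff _]] := A_C1 i j; apply/A_diff/cube_U.
  - exact: A_ii y 0 cy cube0 i j.
  - exact: A_ik y 0 cy cube0 i j k ki.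
split=> [|x z cx cz xz]; first exact: rho_le.
exact/le_lt_trans/rho_le.
Qed.
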